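(* Consider a multi-sender single-uniprior index-coding instance with binary messages, information-flow graph $\mathcal{G}$ and message graph $\mathcal{U}$, and let $\mathcal{V}_S$ be the vertex set of a message-disconnected leaf SCC of $\mathcal{G}$. Then for any index code for this instance, every message $x_j$ with $j\in\mathcal{V}_S$ is a function of the transmitted codeword alone (the concatenation of all senders' outputs); i.e., any receiver can decode all messages of $\mathcal{V}_S$, even without using its own prior message.
   Context: Multi-sender single-uniprior index coding with binary messages: there are $n$ receivers and $n$ independent messages $x_1,\dots,x_n$, each a single bit uniformly distributed on $\{0,1\}$. Receiver $i$ knows $x_i$ a priori and requests a set of messages not containing $x_i$. The information-flow graph is the directed graph $\mathcal{G}=(\mathcal{V},\mathcal{A})$, $\mathcal{V}=\{1,\dots,n\}$, with an arc $(j\to i)$ iff receiver $i$ requests $x_j$. There are $S$ senders; sender $s$ knows a subset $\mathcal{M}_s$ of the messages, and every message is known to some sender. An index code consists of, for each sender $s$, an encoding function mapping the messages in $\mathcal{M}_s$ to $\ell_s$ bits, and for each receiver $i$ a decoding function that, from all senders' outputs together with $x_i$, returns every message requested by $i$, for all message values. The message graph $\mathcal{U}$ is the undirected graph on $\mathcal{V}$ with an edge $\{i,j\}$ iff some sender knows both $x_i$ and $x_j$. A leaf SCC of $\mathcal{G}$ is a strongly connected component with at least two vertices and no arc from it to a vertex outside it. A leaf SCC with vertex set $\mathcal{V}_S$ is message-disconnected iff there are two vertices in $\mathcal{V}_S$ that are not joined by any path in $\mathcal{U}$ (paths may use any vertices of $\mathcal{U}$). *)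

From mathcomp Require Import all_boot.
Set Implicit Arguments. Unset Strict Implicit. Unset Printing Implicit Defensive.

(* Instance data:
   n receivers / messages indexed by 'I_n; messages x : 'I_n -> bool.
   req i j  <=> receiver i requests x_j.
   S senders; M s : {set 'I_n} = messages known to sender s;
   l s = number of bits output by sender s. *)

Definition ifg_arc (n : nat) (req : 'I_n -> 'I_n -> bool) : rel 'I_n :=
  fun j i => req i j.

Definition msg_edge (n S : nat) (M : 'I_S -> {set 'I_n}) : rel 'I_n :=
  fun i j => [exists s, (i \in M s) && (j \in M s)].

Definition leaf_scc (n : nat) (req : 'I_n -> 'I_n -> bool) (Vs : {set 'I_n}) : Prop :=
  [/\ exists v, Vs = [set u | connect (ifg_arc req) v u && connect (ifg_arc req) u v],
      1 < #|Vs| &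
      forall j i, j \in Vs -> ifg_arc req j i -> i \in Vs].

Definition message_disconnected (n S : nat) (M : 'I_S -> {set 'I_n})
  (Vs : {set 'I_n}) : Prop :=
  exists a b, [/\ a \in Vs, b \in Vs & ~~ connect (msg_edge M) a b].

Definition codeword (S : nat) (l : 'I_S -> nat) : Type :=
  forall s : 'I_S, 'I_(l s) -> bool.

Definition is_index_code (n S : nat) (req : 'I_n -> 'I_n -> bool)
  (M : 'I_S -> {set 'I_n}) (l : 'I_S -> nat)
  (enc : forall s : 'I_S, ('I_n -> bool) -> 'I_(l s) -> bool)
  (dec : 'I_n -> codeword l -> bool -> 'I_n -> bool) : Prop :=
  (forall s (x y : 'I_n -> bool), (forall k, k \in M s -> x k = y k) ->
     forall t, enc s x t = enc s y t) /\
  (forall (x : 'I_n -> bool) i j, req i j ->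
     dec i (fun s => enc s x) (x i) j = x j).

From mathcomp Require Import all_boot.
From Stdlib Require Import ClassicalEpsilon FunctionalExtensionality.

(* Agreement of two message vectors with equal codewords propagates backwards
   along arcs of G: receiver w decodes x_u from the codeword and x_w.  Inside a
   strongly connected component it therefore suffices to find one vertex where
   they agree.  Given two message vectors with equal codewords, splice them
   along the U-component of a: take x there and y elsewhere.  Every sender
   knows messages from only one side of that cut, so the splice still has the
   same codeword; it agrees with x at a and with y at b, which are not
   U-connected, hence with both x and y on the whole SCC. *)

Lemma exists_factor {A B C : Type} (f : A -> B) (g : A -> C) :
  inhabited A -> (forall x y, f x = f y -> g x = g y) ->
  exists h : B -> C, forall x, h (f x) = g x.
Proof.
move=> inhA fg; exists (fun b => g (epsilon inhA (fun x => f x = b))) => x.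
by apply: fg; exact: (epsilon_spec inhA (fun x' => f x' = f x) (ex_intro _ x erefl)).
Qed.

Lemma leaf_scc_connect (n : nat) (req : 'I_n -> 'I_n -> bool) (Vs : {set 'I_n}) :
  leaf_scc req Vs -> {in Vs &, forall u w, connect (ifg_arc req) u w}.
Proof.
case=> [[v ->] _ _] u w; rewrite !inE => /andP [_ uv] /andP [vw _].
exact: connect_trans uv vw.
Qed.

Section IndexCode.

Variables (n S : nat) (req : 'I_n -> 'I_n -> bool) (M : 'I_S -> {set 'I_n}).
Variables (l : 'I_S -> nat) (enc : forall s : 'I_S, ('I_n -> bool) -> 'I_(l s) -> bool).
Variable dec : 'I_n -> codeword l -> bool -> 'I_n -> bool.

Set Implicit Arguments.
Unset Strict Implicit.

Definition codeword_of (x : 'I_n -> bool) : codeword l := fun s => enc s x.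

Hypothesis enc_local : forall s (x y : 'I_n -> bool),
  (forall k, k \in M s -> x k = y k) -> forall t, enc s x t = enc s y t.
Hypothesis dec_correct : forall (x : 'I_n -> bool) i j,
  req i j -> dec i (codeword_of x) (x i) j = x j.

Lemma codeword_eq_connect x y : codeword_of x = codeword_of y ->
  forall u w, connect (ifg_arc req) u w -> x w = y w -> x u = y u.
Proof.
move=> exy u w /connectP [p + ->] {w}.
elim: p u => [|w p IH] u //= /andP [uw /IH{}IH] /IH xyw.
by rewrite -(dec_correct x uw) -(dec_correct y uw) exy xyw.
Qed.

Definition splice (a : 'I_n) (x y : 'I_n -> bool) (k : 'I_n) : bool :=
  if connect (msg_edge M) a k then x k else y k.

Lemma codeword_splice a x y : codeword_of x = codeword_of y ->
  codeword_of (splice a x y) = codeword_of x.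
Proof.
move=> exy; apply: functional_extensionality_dep => s.
case: (boolP [exists k, (k \in M s) && connect (msg_edge M) a k]).
- move=> /existsP [k /andP [kM ak]].
  apply: functional_extensionality; apply: enc_local => m mM.
  rewrite /splice (connect_trans ak (connect1 _)) //.
  by apply/existsP; exists s; rewrite kM mM.
- move=> noM; rewrite exy; apply: functional_extensionality; apply: enc_local => m mM.
  have /negbTE am : ~~ connect (msg_edge M) a m.
    by apply: contra noM => am; apply/existsP; exists m; rewrite mM.
  by rewrite /splice am.
Qed.

Lemma codeword_eq_on_disconnected_scc (Vs : {set 'I_n}) a b :
  {in Vs &, forall u w, connect (ifg_arc req) u w} ->
  a \in Vs -> b \in Vs -> ~~ connect (msg_edge M) a b ->
  forall x y, codeword_of x = codeword_of y -> {in Vs, x =1 y}.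
Proof.
move=> sccV aV bV nab x y exy k kV.
have ezx := codeword_splice a exy.
have ezy : codeword_of (splice a x y) = codeword_of y by rewrite ezx.
have za : splice a x y a = x a by rewrite /splice connect0.
have zb : splice a x y b = y b by rewrite /splice (negbTE nab).
rewrite -(codeword_eq_connect ezx (sccV k a kV aV) za).
exact: (codeword_eq_connect ezy (sccV k b kV bV) zb).
Qed.

End IndexCode.

Theorem lemma11 (n S : nat) (req : 'I_n -> 'I_n -> bool)
  (M : 'I_S -> {set 'I_n}) (l : 'I_S -> nat)
  (enc : forall s : 'I_S, ('I_n -> bool) -> 'I_(l s) -> bool)
  (dec : 'I_n -> codeword l -> bool -> 'I_n -> bool)
  (Vs : {set 'I_n}) :
  (forall i, ~~ req i i) ->
  (forall j, exists s, j \in M s) ->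
  is_index_code req M enc dec ->
  leaf_scc req Vs ->
  message_disconnected M Vs ->
  forall j, j \in Vs ->
    exists f : codeword l -> bool, forall x : 'I_n -> bool, f (fun s => enc s x) = x j.
Proof.
move=> _ _ [enc_local dec_correct] /leaf_scc_connect sccV [a [b [aV bV nab]]] j jV.
have inh : inhabited ('I_n -> bool) by constructor; exact: (fun _ => false).
have [f fP] := exists_factor (codeword_of enc) (fun x => x j) inh
  (fun x y exy => codeword_eq_on_disconnected_scc enc_local dec_correct
                    sccV aV bV nab exy jV).
by exists f.
Qed.
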